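(* Let $\bar x$ be a sparsest solution of problem (P), and let $\tilde X$ be an optimal solution of the QBP program for some $\lambda\ge0$. Suppose that: - $\operatorname{rank}(\tilde X)=1$; - $B$ is $(\epsilon,2\|\tilde X\|_0)$-RIP for some $\epsilon<1$. Then $\tilde X=\begin{bmatrix}1\\ \bar x\end{bmatrix}\begin{bmatrix}1 & \bar x^H\end{bmatrix}$.
   Context: Fix integers $n,N\ge 1$ and data $a_i\in\mathbb{C}$, $b_i,c_i\in\mathbb{C}^n$, $Q_i\in\mathbb{C}^{n\times n}$, $y_i\in\mathbb{C}$ for $i=1,\dots,N$. Problem (P) is $$\min_{x\in\mathbb{C}^n}\|x\|_0\quad\text{subject to}\quad y_i=a_i+b_i^H x+x^H c_i+x^H Q_i x,\quad i=1,\dots,N.$$ Here $\|\cdot\|_0$ counts nonzero entries of a vector or matrix, and ${}^H$ denotes conjugate transpose. Let $\Phi_i=\begin{bmatrix} a_i & b_i^H\\ c_i & Q_i\end{bmatrix}\in\mathbb{C}^{(n+1)\times(n+1)}$. Define the linear operator $B:\mathbb{C}^{(n+1)\times(n+1)}\to\mathbb{C}^N$ by $B(X)=(\operatorname{tr}(\Phi_i X))_{i=1}^N$. The QBP program with parameter $\lambda\ge0$ is $$\min_{X}\ \operatorname{tr}(X)+\lambda\|X\|_1\quad\text{subject to}\quad y_i=\operatorname{tr}(\Phi_i X)\ (i=1,\dots,N),\quad X_{1,1}=1,\quad X\succeq0,$$ where $X$ ranges over Hermitian $(n+1)\times(n+1)$ matrices and $\|X\|_1$ is the sum of the absolute values of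 the entries. $B$ is called $(\epsilon,k)$-RIP if $\left|\frac{\|B(X)\|^2}{\|X\|^2}-1\right|<\epsilon$ for every nonzero $X$ with $\|X\|_0\le k$. In this condition $\|B(X)\|$ is the Euclidean norm in $\mathbb{C}^N$ and $\|X\|$ is the spectral norm. *)

(* Complex numbers: an arbitrary numClosedFieldType C
   (the complex field is one such). *)
From HB Require Import structures.
From mathcomp Require Import all_boot all_order all_algebra.
Set Implicit Arguments. Unset Strict Implicit. Unset Printing Implicit Defensive.
Import Order.TTheory GRing.Theory Num.Theory.
Local Open Scope ring_scope.

Section Defs.
Variable C : numClosedFieldType.

Definition hadj m p (A : 'M[C]_(m, p)) : 'M[C]_(p, m) := (map_mx Num.conj A)^T.

Definition l0 m p (A : 'M[C]_(m, p)) : nat := #|[set ij : 'I_m * 'I_p | A ij.1 ij.2 != 0]|.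

Definition l1 m p (A : 'M[C]_(m, p)) : C := \sum_(i < m) \sum_(j < p) `|A i j|.

Definition vnorm2 m (v : 'cV[C]_m) : C := \sum_(i < m) `|v i 0| ^+ 2.

Definition fnorm2 N (w : 'I_N -> C) : C := \sum_(i < N) `|w i| ^+ 2.

Definition is_specnorm2 m p (X : 'M[C]_(m, p)) (s : C) : Prop :=
  (forall v : 'cV[C]_p, vnorm2 (X *m v) <= s * vnorm2 v) /\
  (exists2 v : 'cV[C]_p, v != 0 & vnorm2 (X *m v) = s * vnorm2 v).

Definition quadf n (a : C) (b c : 'cV[C]_n) (Q : 'M[C]_n) (x : 'cV[C]_n) : C :=
  a + (hadj b *m x) 0 0 + (hadj x *m c) 0 0 + (hadj x *m Q *m x) 0 0.

Definition P_feasible n N (a : 'I_N -> C) (b c : 'I_N -> 'cV[C]_n)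
  (Q : 'I_N -> 'M[C]_n) (y : 'I_N -> C) (x : 'cV[C]_n) : Prop :=
  forall i, y i = quadf (a i) (b i) (c i) (Q i) x.

Definition P_sparsest n N a b c Q y (x : 'cV[C]_n) : Prop :=
  @P_feasible n N a b c Q y x /\
  forall z, P_feasible a b c Q y z -> (l0 x <= l0 z)%N.

Definition Phi n (a : C) (b c : 'cV[C]_n) (Q : 'M[C]_n) : 'M[C]_(1 + n) :=
  block_mx (a%:M : 'M[C]_1) (hadj b) c Q.

Definition Bop n N (a : 'I_N -> C) (b c : 'I_N -> 'cV[C]_n) (Q : 'I_N -> 'M[C]_n)
  (X : 'M[C]_(1 + n)) : 'I_N -> C :=
  fun i => \tr (Phi (a i) (b i) (c i) (Q i) *m X).

Definition hermitian m (X : 'M[C]_m) : Prop := hadj X = X.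

Definition psd m (X : 'M[C]_m) : Prop :=
  hermitian X /\ forall v : 'cV[C]_m, 0 <= (hadj v *m X *m v) 0 0.

Definition QBP_feasible n N a b c Q (y : 'I_N -> C) (X : 'M[C]_(1 + n)) : Prop :=
  [/\ forall i, y i = @Bop n N a b c Q X i,
      X 0 0 = 1 & psd X].

Definition QBP_obj n (lam : C) (X : 'M[C]_(1 + n)) : C := \tr X + lam * l1 X.

Definition QBP_optimal n N a b c Q y (lam : C) (X : 'M[C]_(1 + n)) : Prop :=
  @QBP_feasible n N a b c Q y X /\
  forall Z, QBP_feasible a b c Q y Z -> QBP_obj lam X <= QBP_obj lam Z.

Definition RIP n N a b c Q (eps : C) (k : nat) : Prop :=
  forall X : 'M[C]_(1 + n), X != 0 -> (l0 X <= k)%N ->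
  forall s, is_specnorm2 X s ->
    `| fnorm2 (@Bop n N a b c Q X) / s - 1 | < eps.

End Defs.

From Pilot Require Import Defs.
From HB Require Import structures.
From mathcomp Require Import all_boot all_order all_algebra.
From mathcomp Require Import sesquilinear spectral.
Import Order.TTheory GRing.Theory Num.Theory.
Set Implicit Arguments. Unset Strict Implicit. Unset Printing Implicit Defensive.
Local Open Scope ring_scope.

(* Write u x = [1; x].  The lifted quadratic form satisfies
   tr (Phi_i * u x u x^H) = a_i + b_i^H x + x^H c_i + x^H Q_i x, so a vector x
   is feasible for (P) exactly when the rank-one matrix u x u x^H satisfies the
   linear constraints B(X) = y.  The proof has three ingredients:
   - a Hermitian matrix of rank one with top-left entry 1 factors as u x u x^H
     (x is read off its first column), so the optimal Xt is u x u x^H with x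
     feasible for (P), whence ||xbar||_0 <= ||x||_0;
   - the support of u z u z^H is supp(u z) x supp(u z), so
     ||Xt - u xbar u xbar^H||_0 <= ||Xt||_0 + ||u xbar u xbar^H||_0 <= 2||Xt||_0;
   - every matrix has a (squared) spectral norm, obtained by diagonalizing the
     Gram matrix D^H D; hence an (eps,k)-RIP operator with eps < 1 has no
     nonzero k-sparse matrix in its kernel.
   Since B(Xt - u xbar u xbar^H) = y - y = 0, the difference vanishes. *)

Section QBPRecovery.
Variable C : numClosedFieldType.

Lemma hadj_mul m p q (A : 'M[C]_(m, p)) (B : 'M[C]_(p, q)) :
  hadj (A *m B) = hadj B *m hadj A.
Proof. by rewrite /hadj map_mxM trmx_mul. Qed.

Lemma hadjK m p (A : 'M[C]_(m, p)) : hadj (hadj A) = A.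
Proof. by apply/matrixP=> i j; rewrite !mxE conjCK. Qed.

Lemma hadjE m p (A : 'M[C]_(m, p)) : hadj A = (A ^t* )%sesqui.
Proof. by apply/matrixP=> i j; rewrite !mxE. Qed.

Lemma hadj_col m1 m2 p (A : 'M[C]_(m1, p)) (B : 'M[C]_(m2, p)) :
  hadj (col_mx A B) = row_mx (hadj A) (hadj B).
Proof. by rewrite /hadj map_col_mx tr_col_mx. Qed.

Lemma hadj1 : hadj (1%:M : 'M[C]_1) = 1%:M.
Proof. by apply/matrixP=> i j; rewrite !mxE !ord1 /= conjC1. Qed.

Lemma vnorm2E m (v : 'cV[C]_m) : vnorm2 v = (hadj v *m v) 0 0.
Proof. by rewrite /vnorm2 !mxE; apply: eq_bigr => i _; rewrite !mxE normCKC. Qed.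

Lemma vnorm2_ge0 m (v : 'cV[C]_m) : 0 <= vnorm2 v.
Proof. by apply: sumr_ge0 => i _; rewrite exprn_ge0. Qed.

Lemma vnorm2_unitary m (P : 'M[C]_m) (v : 'cV[C]_m) :
  hadj P *m P = 1%:M -> vnorm2 (P *m v) = vnorm2 v.
Proof. by move=> PP; rewrite !vnorm2E hadj_mul -mulmxA (mulmxA _ P) PP mul1mx. Qed.

Lemma diag_form_delta m (d : 'I_m -> C) (i : 'I_m) :
  \sum_j d j * `|(delta_mx i 0 : 'cV[C]_m) j 0| ^+ 2 = d i.
Proof.
rewrite (bigD1 i) //= big1 ?addr0 => [|j ji].
  by rewrite !mxE !eqxx /= normr1 expr1n mulr1.
by rewrite !mxE (negbTE ji) /= normr0 expr0n mulr0.
Qed.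

Lemma vnorm2_delta m (i : 'I_m) : vnorm2 (delta_mx i 0 : 'cV[C]_m) = 1.
Proof.
by rewrite -[RHS](diag_form_delta (fun=> 1) i); apply: eq_bigr => j _; rewrite mul1r.
Qed.

Lemma exists_max_real (T : finType) (x0 : T) (f : T -> C) :
  (forall i, f i \is Num.real) -> exists i0, forall j, f j <= f i0.
Proof.
move=> freal.
suff [i0 Hi0] : exists i0, forall j, j \in enum T -> f j <= f i0.
  by exists i0 => j; apply: Hi0; rewrite mem_enum.
elim: (enum T) => [|k s [i0 IH]]; first by exists x0.
have /orP[ki0|i0k] := real_leVge (freal k) (freal i0).
- by exists i0 => j; rewrite inE => /orP[/eqP->|/IH].
- exists k => j; rewrite inE => /orP[/eqP->//|/IH ji0].
  exact: le_trans ji0 i0k.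
Qed.

(* Spectral theorem for the Gram matrix D^H D: in suitable unitary coordinates
   P v the quadratic form ||D v||^2 is diagonal. *)
Lemma gram_diagonal m p (D : 'M[C]_(m, p)) :
  exists (P : 'M[C]_p) (d : 'rV[C]_p),
    [/\ P *m hadj P = 1%:M, hadj P *m P = 1%:M &
        forall v, vnorm2 (D *m v) = \sum_i d 0 i * `|(P *m v) i 0| ^+ 2].
Proof.
set A := hadj D *m D.
have A_normal : A \is normalmx.
  by apply/normalmxP; rewrite -hadjE /A hadj_mul hadjK.
have /orthomx_spectralP AE := A_normal.
set P := spectralmx A in AE; set d := spectral_diag A in AE.
have PPh : P *m hadj P = 1%:M.
  by rewrite hadjE; apply/unitarymxP/spectral_unitarymx.
have PhP : hadj P *m P = 1%:M by apply: mulmx1C.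
have AE' : A = hadj P *m diag_mx d *m P.
  by rewrite AE invmx_unitary ?spectral_unitarymx // hadjE.
exists P, d; split=> // v.
rewrite vnorm2E hadj_mul -mulmxA (mulmxA _ D) -/A AE'.
have -> : hadj v *m (hadj P *m diag_mx d *m P *m v)
          = hadj (P *m v) *m diag_mx d *m (P *m v) by rewrite hadj_mul !mulmxA.
rewrite mul_mx_diag !mxE.
by apply: eq_bigr => i _; rewrite !mxE normCKC mulrCA mulrA.
Qed.

(* Every matrix has a squared spectral norm: the largest eigenvalue of D^H D,
   attained at the corresponding eigenvector. *)
Lemma specnorm2_exists m p (D : 'M[C]_(m, p.+1)) : exists s, is_specnorm2 D s.
Proof.
have [P [d [PPh PhP Dform]]] := gram_diagonal D.
pose e i : 'cV[C]_p.+1 := hadj P *m delta_mx i 0.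
have Pe i : P *m e i = delta_mx i 0 by rewrite mulmxA PPh mul1mx.
have dE i : d 0 i = vnorm2 (D *m e i) by rewrite Dform Pe diag_form_delta.
have [i0 dmax] : exists i0, forall j, d 0 j <= d 0 i0.
  by apply: (exists_max_real ord0) => i; rewrite dE ger0_real ?vnorm2_ge0.
exists (d 0 i0); split.
- move=> v; rewrite Dform -(vnorm2_unitary v PhP) /vnorm2 mulr_sumr.
  apply: ler_sum => i _; apply: ler_wpM2r; [exact: exprn_ge0 | exact: dmax].
- have ne1 : vnorm2 (e i0) = 1 by rewrite -(vnorm2_unitary _ PhP) Pe vnorm2_delta.
  exists (e i0); last by rewrite -dE ne1 mulr1.
  apply/eqP => e0; move: ne1; rewrite e0 /vnorm2 big1 => [/esym/eqP|i _].
    by rewrite oner_eq0.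
  by rewrite mxE normr0 expr0n.
Qed.

Lemma RIP_sparse_kernel n N (a : 'I_N -> C) (b c : 'I_N -> 'cV[C]_n)
    (Q : 'I_N -> 'M[C]_n) (eps : C) (k : nat) (X : 'M[C]_(1 + n)) :
  RIP a b c Q eps k -> eps < 1 ->
  (forall i, Bop a b c Q X i = 0) -> (l0 X <= k)%N -> X = 0.
Proof.
move=> rip eps1 BX0 l0X; apply/eqP/negPn/negP => X0.
have [s Hs] := specnorm2_exists X.
have := rip _ X0 l0X s Hs.
rewrite /fnorm2 big1 => [|i _]; last by rewrite BX0 normr0 expr0n.
by rewrite mul0r sub0r normrN normr1 => /lt_trans/(_ eps1); rewrite ltxx.
Qed.

Lemma trace_Phi_lift n (a : C) (b c : 'cV[C]_n) (Q : 'M[C]_n) (x : 'cV[C]_n) :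
  \tr (Phi a b c Q *m (col_mx 1%:M x *m hadj (col_mx 1%:M x))) = quadf a b c Q x.
Proof.
rewrite mulmxA mxtrace_mulC trace_mx11 hadj_col hadj1 /Phi.
rewrite mulmxA mul_row_block !mul1mx mul_row_col mulmx1 mulmxDl /quadf.
by rewrite !mxE eqxx mulr1n -!addrA; congr (_ + _); exact: addrCA.
Qed.

Definition supp m (v : 'cV[C]_m) : {set 'I_m} := [set i | v i 0 != 0].

Lemma l0_col m (v : 'cV[C]_m) : l0 v = #|supp v|.
Proof.
rewrite /l0 (_ : #|supp v| = #|setX (supp v) [set: 'I_1]|); last first.
  by rewrite cardsX cardsT card_ord muln1.
by apply: eq_card => -[i j]; rewrite !inE ord1 /= andbT.
Qed.

Lemma l0_outer m (v : 'cV[C]_m) : l0 (v *m hadj v) = (#|supp v| * #|supp v|)%N.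
Proof.
rewrite -cardsX /l0; apply: eq_card => -[i j].
by rewrite !inE /= !mxE big_ord1 !mxE mulf_eq0 negb_or conjC_eq0.
Qed.

Lemma supp_lift n (x : 'cV[C]_n) :
  #|supp (col_mx (1%:M : 'M[C]_1) x)| = (1 + #|supp x|)%N.
Proof.
rewrite -!sum1_card big_split_ord /=; congr (_ + _)%N.
  by rewrite big_mkcond big_ord1 inE col_mxEu !mxE eqxx /= oner_eq0.
by apply: eq_bigl => i; rewrite !inE col_mxEd.
Qed.

Lemma l0_lift_le n (x z : 'cV[C]_n) : (l0 x <= l0 z)%N ->
  (l0 (col_mx 1%:M x *m hadj (col_mx 1%:M x))
     <= l0 (col_mx 1%:M z *m hadj (col_mx 1%:M z)))%N.
Proof.
rewrite !l0_outer !supp_lift !l0_col => xz.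
by apply: leq_mul; rewrite leq_add2l.
Qed.

Lemma l0_sub m p (A B : 'M[C]_(m, p)) : (l0 (A - B) <= l0 A + l0 B)%N.
Proof.
apply: leq_trans (leq_card_setU _ _); apply: subset_leq_card.
apply/subsetP => -[i j]; rewrite !inE /= !mxE.
by case: (eqVneq (A i j) 0) => [->|//]; rewrite sub0r oppr_eq0 => ->; rewrite orbT.
Qed.

(* A Hermitian rank-one matrix with X_00 = 1 is the outer product of its first
   column: every row is a multiple X_i0 of row 0, and row 0 is conj (col 0). *)
Lemma rank1_hermitian_outer m (X : 'M[C]_(1 + m)) :
  Defs.hermitian X -> X 0 0 = 1 -> \rank X = 1%N -> X = col 0 X *m hadj (col 0 X).
Proof.
move=> hX X00 rX.
have row0_neq0 : row 0 X != 0.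
  by apply/eqP => /matrixP /(_ 0 0); rewrite !mxE X00 => /eqP; rewrite oner_eq0.
have row0_span : (row 0 X == X)%MS.
  by rewrite -mxrank_leqif_eq ?row_sub // rank_rV row0_neq0 rX.
apply/matrixP => i j.
have /sub_rVP [k /matrixP rowiE] : (row i X <= row 0 X)%MS.
  by rewrite (eqmxP row0_span) row_sub.
have Xij : X i j = k * X 0 j by have := rowiE 0 j; rewrite !mxE.
have Xi0 : X i 0 = k by have := rowiE 0 0; rewrite !mxE X00 mulr1.
have X0j : X 0 j = (X j 0)^* by rewrite -{1}hX !mxE.
by rewrite !mxE big_ord1 !mxE -X0j Xij Xi0.
Qed.

Lemma rank1_lift n (X : 'M[C]_(1 + n)) :
  Defs.hermitian X -> X 0 0 = 1 -> \rank X = 1%N ->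
  exists x : 'cV[C]_n, X = col_mx 1%:M x *m hadj (col_mx 1%:M x).
Proof.
move=> hX X00 rX; exists (dsubmx (col 0 X)).
have col0E : col 0 X = col_mx 1%:M (dsubmx (col 0 X)).
  rewrite -{1}[col 0 X]vsubmxK; congr col_mx; apply/matrixP => i j.
  by rewrite !ord1 !mxE /= -X00; congr (X _ _); apply: val_inj.
by rewrite -col0E {1}(rank1_hermitian_outer hX X00 rX).
Qed.

End QBPRecovery.

Theorem mainTheorem3 (C : numClosedFieldType) (n N : nat)
  (a : 'I_N -> C) (b c : 'I_N -> 'cV[C]_n) (Q : 'I_N -> 'M[C]_n) (y : 'I_N -> C)
  (xbar : 'cV[C]_n) (Xt : 'M[C]_(1 + n)) (lam eps : C) :
  (0 < n)%N -> (0 < N)%N ->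
  P_sparsest a b c Q y xbar ->
  0 <= lam ->
  QBP_optimal a b c Q y lam Xt ->
  \rank Xt = 1%N ->
  eps < 1 ->
  RIP a b c Q eps (2 * l0 Xt) ->
  Xt = col_mx (1%:M : 'M[C]_1) xbar *m hadj (col_mx (1%:M : 'M[C]_1) xbar).
Proof.
move=> _ _ [xbar_feas xbar_min] _ [[yXt Xt00 [hXt _]] _] rXt eps1 rip.
have [x XtE] := rank1_lift hXt Xt00 rXt.
set Xb := col_mx 1%:M xbar *m hadj (col_mx 1%:M xbar).
have x_feas : P_feasible a b c Q y x by move=> i; rewrite yXt /Bop XtE trace_Phi_lift.
have B_diff0 i : Bop a b c Q (Xt - Xb) i = 0.
  by rewrite /Bop mulmxBr linearB /= XtE !trace_Phi_lift -xbar_feas -x_feas subrr.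
have l0_diff : (l0 (Xt - Xb) <= 2 * l0 Xt)%N.
  apply: leq_trans (l0_sub _ _) _; rewrite mul2n -addnn leq_add2l XtE.
  exact/l0_lift_le/xbar_min.
by apply/eqP; rewrite -subr_eq0; apply/eqP/(RIP_sparse_kernel rip eps1 B_diff0 l0_diff).
Qed.
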